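(* Assume the standing assumption (S), and suppose $|\eta(x)|\le U<\infty$ for all $x\in I$. Then there exists $A\in\mathbb R_+$ such that $a_N(y)\le\frac{A}{\sqrt N}$ for all $N\ge N_0$ and all $y\in I$.
   Context: Let $-\infty\le l<r\le\infty$, $I=(l,r)$, $\eta\colon\mathbb R\to\mathbb R$ Borel with $\eta\ne0$ on $I$, $1/\eta^2\in L^1_{\mathrm{loc}}(I)$, $\eta=0$ off $I$, $m\in I$. $q(y,x)=\int_y^x\int_y^u\frac{2}{\eta^2(z)}dz\,du\in[0,\infty]$; $q(l+)=\lim_{x\searrow l}q(m,x)$, $q(r-)=\lim_{x\nearrow r}q(m,x)$. $\mu\ne\delta_0$ is a centered probability measure with finite first moment, $G_y(a)=\int q(y,y+ax)\mu(dx)$ for $y\in I$, $a\ge0$. Standing assumption (S): one of the following holds. (S1) $l=-\infty$, $r=\infty$, and there is $y_0\in I$ with $G_{y_0}(a)<\infty$ for all $a>0$. (S2) $l>-\infty$, $r=\infty$, $\inf\operatorname{supp}\mu>-\infty$, there is $y_0\in I$ with $\int_{\mathbb R_+}q(y_0,y_0+ax)\mu(dx)<\infty$ for all $a>0$; if $q(l+)<\infty$ then $\mu(\{\inf\operatorname{supp}\mu\})>0$; if $q(l+)=\infty$ then $\liminf_{y\to\infty}G_y(\bar a(y))>0$ and $\liminf_{y\searrow l}G_y(\bar a(y))>0$, where $\bar a(y)=\frac{l-y}{\inf\operatorname{supp}\mu}$. (S3) the mirror image of (S2): $l=-\infty$, $r<\infty$, $\sup\operatorname{supp}\mu<\infty$,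 there is $y_0\in I$ with $\int_{(-\infty,0]}q(y_0,y_0+ax)\mu(dx)<\infty$ for all $a>0$; if $q(r-)<\infty$ then $\mu(\{\sup\operatorname{supp}\mu\})>0$; if $q(r-)=\infty$ then $\liminf_{y\to-\infty}G_y(\bar a(y))>0$ and $\liminf_{y\nearrow r}G_y(\bar a(y))>0$, where $\bar a(y)=\frac{r-y}{\sup\operatorname{supp}\mu}$. (S4) $-\infty<l<r<\infty$, $\mu$ has bounded support; with $\bar a(y)=\frac{l-y}{\inf\operatorname{supp}\mu}\wedge\frac{r-y}{\sup\operatorname{supp}\mu}$: if $q(l+)<\infty$ then $\mu(\{\inf\operatorname{supp}\mu\})>0$; if $q(l+)=\infty$ then $\liminf_{y\searrow l}G_y(\bar a(y))>0$; if $q(r-)<\infty$ then $\mu(\{\sup\operatorname{supp}\mu\})>0$; if $q(r-)=\infty$ then $\liminf_{y\nearrow r}G_y(\bar a(y))>0$. Under (S) there is $N_0\in\mathbb N$ and, for $N\ge N_0$, the scale factor $a_N(y)=\sup\{a\ge0:G_y(a)\le\frac1N\}$ for $y\in I$ and $a_N=0$ at finite endpoints of $I$. *)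

From HB Require Import structures.
From mathcomp Require Import all_boot all_order all_algebra.
From mathcomp Require Import all_classical all_reals all_analysis.
Set Implicit Arguments. Unset Strict Implicit. Unset Printing Implicit Defensive.
Import Order.TTheory GRing.Theory Num.Theory.
Import numFieldNormedType.Exports.
Local Open Scope classical_set_scope.
Local Open Scope ring_scope.
Local Open Scope ereal_scope.

Section Defs.
Context {R : realType}.
Notation leb := (@lebesgue_measure R).

Definition inI (l r : \bar R) (x : R) : Prop := l < x%:E < r.

Definition twoinv (eta : R -> R) (z : R) : \bar R :=
  if eta z == 0%R then +oo else (2 / eta z ^+ 2)%:E.

(* q(y,x) = int_y^x int_y^u 2/eta^2(z) dz du  in [0, +oo]
   (oriented integrals; for x < y both orientations flip) *)
Definition q (eta : R -> R) (y x : R) : \bar R :=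
  if (y <= x)%R then
    \int[leb]_(u in `[y, x]%classic) \int[leb]_(z in `[y, u]%classic) twoinv eta z
  else
    \int[leb]_(u in `[x, y]%classic) \int[leb]_(z in `[u, y]%classic) twoinv eta z.

Definition q_lplus (eta : R -> R) (m l : R) : \bar R := lim (q eta m x @[x --> l^'+]).
Definition q_rminus (eta : R -> R) (m r : R) : \bar R := lim (q eta m x @[x --> r^'-]).

Definition supp (mu : set R -> \bar R) : set R :=
  [set x | forall e : R, (0 < e)%R -> 0 < mu (ball x e)].
Definition infsupp (mu : set R -> \bar R) : \bar R := ereal_inf [set x%:E | x in supp mu].
Definition supsupp (mu : set R -> \bar R) : \bar R := ereal_sup [set x%:E | x in supp mu].

Definition G (eta : R -> R) (mu : probability R R) (y a : R) : \bar R :=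
  \int[mu]_x q eta y (y + a * x).

Definition aN (eta : R -> R) (mu : probability R R) (N : nat) (y : R) : \bar R :=
  ereal_sup [set a%:E | a in [set a : R | (0 <= a)%R /\ G eta mu y a <= (N%:R^-1)%:E]].

Definition S1 (l r : \bar R) (eta : R -> R) (mu : probability R R) : Prop :=
  [/\ l = -oo, r = +oo &
   exists2 y0, inI l r y0 & forall a : R, (0 < a)%R -> G eta mu y0 a < +oo].

Definition S2 (l r : \bar R) (eta : R -> R) (mu : probability R R) (m : R) : Prop :=
  exists l0 : R, let abar := fun y : R => ((l0 - y) / fine (infsupp mu))%R in
  ((l = l0%:E) /\ (r = +oo) /\ (-oo < infsupp mu) /\ ((exists2 y0, inI l r y0 & forall a : R, (0 < a)%R ->
      \int[mu]_(x in [set x : R | (0 <= x)%R]) q eta y0 (y0 + a * x) < +oo)) /\ ((q_lplus eta m l0 < +oo -> 0 < mu [set fine (infsupp mu)])) /\ ((q_lplus eta m l0 = +oo ->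
      0 < limf_einf (fun y => G eta mu y (abar y)) (pinfty_nbhs R) /\
      0 < limf_einf (fun y => G eta mu y (abar y)) (l0^'+)))).

Definition S3 (l r : \bar R) (eta : R -> R) (mu : probability R R) (m : R) : Prop :=
  exists r0 : R, let abar := fun y : R => ((r0 - y) / fine (supsupp mu))%R in
  ((l = -oo) /\ (r = r0%:E) /\ (supsupp mu < +oo) /\ ((exists2 y0, inI l r y0 & forall a : R, (0 < a)%R ->
      \int[mu]_(x in [set x : R | (x <= 0)%R]) q eta y0 (y0 + a * x) < +oo)) /\ ((q_rminus eta m r0 < +oo -> 0 < mu [set fine (supsupp mu)])) /\ ((q_rminus eta m r0 = +oo ->
      0 < limf_einf (fun y => G eta mu y (abar y)) (ninfty_nbhs R) /\
      0 < limf_einf (fun y => G eta mu y (abar y)) (r0^'-)))).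

Definition S4 (l r : \bar R) (eta : R -> R) (mu : probability R R) (m : R) : Prop :=
  exists l0 r0 : R, let abar := fun y : R =>
     (Num.min ((l0 - y) / fine (infsupp mu)) ((r0 - y) / fine (supsupp mu)))%R in
  ((l = l0%:E) /\ (r = r0%:E) /\ (-oo < infsupp mu) /\ (supsupp mu < +oo) /\ ((q_lplus eta m l0 < +oo -> 0 < mu [set fine (infsupp mu)])) /\ ((q_lplus eta m l0 = +oo ->
      0 < limf_einf (fun y => G eta mu y (abar y)) (l0^'+))) /\ ((q_rminus eta m r0 < +oo -> 0 < mu [set fine (supsupp mu)])) /\ ((q_rminus eta m r0 = +oo ->
      0 < limf_einf (fun y => G eta mu y (abar y)) (r0^'-)))).

Definition standing_S (l r : \bar R) (eta : R -> R) (mu : probability R R) (m : R) : Prop :=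
  S1 l r eta mu \/ S2 l r eta mu m \/ S3 l r eta mu m \/ S4 l r eta mu m.

End Defs.

From HB Require Import structures.
From mathcomp Require Import all_boot all_order all_algebra.
From mathcomp Require Import all_classical all_reals all_analysis.
From mathcomp Require Import measurable_realfun ring lra.
Import Order.TTheory GRing.Theory Num.Theory.
Import numFieldNormedType.Exports.
Local Open Scope classical_set_scope.
Local Open Scope ring_scope.
Local Open Scope ereal_scope.

(* Since |eta| <= U, the density 2/eta^2 is at least 2/U^2, so
   q(y, x) >= (x - y)^2 / (2 U^2).  As mu is not the Dirac mass at 0, it gives
   some mass p > 0 to {|x| >= d} for some d > 0, whence G_y(a) >= K a^2 with
   K = d^2 p / (2 U^2) uniformly in y.  Thus G_y(a) <= 1/N forces
   a <= 1 / sqrt (K N).  None of the integrability or boundary conditions of (S)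
   is needed. *)

Section integral_lower_bound.
Context d (T : measurableType d) (R : realType) (mu : {measure set T -> \bar R}).

(* Unlike [ge0_le_integral], no measurability is needed: the nonnegative
   integral is a supremum over simple functions below the integrand. *)
Lemma ge0_le_integral_nonmeasurable (D : set T) (f1 f2 : T -> \bar R) :
  (forall x, D x -> 0 <= f1 x) -> (forall x, D x -> f1 x <= f2 x) ->
  \int[mu]_(x in D) f1 x <= \int[mu]_(x in D) f2 x.
Proof.
move=> f10 f12; have f20 x : D x -> 0 <= f2 x.
  by move=> Dx; exact: le_trans (f10 _ Dx) (f12 _ Dx).
rewrite !ge0_integralE//; apply: ereal_sup_le => _ [h /= hf <-].
exists h => //= x; apply: le_trans (hf x) _.
by rewrite /patch; case: ifP => // /set_mem /f12.
Qed.

Lemma cst_mul_measure_le_integral (A D : set T) (k : R) (f : T -> \bar R) :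
  measurable A -> A `<=` D -> (0 <= k)%R ->
  (forall x, D x -> 0 <= f x) -> (forall x, A x -> k%:E <= f x) ->
  k%:E * mu A <= \int[mu]_(x in D) f x.
Proof.
move=> mA AD k0 f0 kf; rewrite -(integral_cst mu mA) (integral_mkcond A).
rewrite (integral_mkcond D) ge0_le_integral_nonmeasurable// => x _.
  by rewrite /patch; case: ifP => // _; rewrite lee_fin.
rewrite /patch; case: ifP => [/set_mem Ax|_]; last by case: ifP => // /set_mem /f0.
by rewrite mem_set ?kf //; exact: AD.
Qed.

End integral_lower_bound.

Lemma lebesgue_measure_itvcc {R : realType} (a b : R) : (a <= b)%R ->
  (@lebesgue_measure R) `[a, b] = (b - a)%:E.
Proof.
move=> ab; rewrite lebesgue_measure_itv /= lte_fin.
case: ifPn => [_|]; first by rewrite EFinN.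
rewrite -leNgt => ba; have -> : b = a by apply/le_anti/andP.
by rewrite subrr.
Qed.

(* Half of [lo, hi] lies at distance at least (hi - lo)/2 from the endpoint y. *)
Lemma integral_itv_ge_dist_endpoint {R : realType} (f : R -> \bar R) (c lo hi y : R) :
  (0 <= c)%R -> (lo <= hi)%R -> y = lo \/ y = hi ->
  (forall u, (lo <= u <= hi)%R -> (c * `|u - y|)%:E <= f u) ->
  (c / 4 * (hi - lo) ^+ 2)%:E <= \int[@lebesgue_measure R]_(u in `[lo, hi]) f u.
Proof.
move=> c0 lohi hy hf; set mid := ((lo + hi) / 2)%R.
have k0 : (0 <= c * ((hi - lo) / 2))%R by apply: mulr_ge0 => //; lra.
have f0 u : (lo <= u <= hi)%R -> 0 <= f u.
  by move=> /hf; apply: le_trans; rewrite lee_fin mulr_ge0.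
have kf u : (lo <= u <= hi)%R -> (`|u - y| >= (hi - lo) / 2)%R ->
    (c * ((hi - lo) / 2))%:E <= f u.
  by move=> /hf + ?; apply: le_trans; rewrite lee_fin ler_wpM2l.
case: hy => ?; subst y.
- have := @cst_mul_measure_le_integral _ (measurableTypeR R) R lebesgue_measure
    `[mid, hi] `[lo, hi] (c * ((hi - lo) / 2)) f (measurable_itv _).
  rewrite /= (@lebesgue_measure_itvcc _ _ _ (_ : mid <= hi)%R) -?EFinM;
    last by rewrite /mid; lra.
  have -> : (c * ((hi - lo) / 2) * (hi - mid) = c / 4 * (hi - lo) ^+ 2)%R
    by rewrite /mid; field.
  apply => // [u|u]; rewrite /= !in_itv /= /mid => /andP[? ?].
    by apply/andP; split; lra.
  by apply: kf; [apply/andP; split; lra | rewrite ger0_norm; lra].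
- have := @cst_mul_measure_le_integral _ (measurableTypeR R) R lebesgue_measure
    `[lo, mid] `[lo, hi] (c * ((hi - lo) / 2)) f (measurable_itv _).
  rewrite /= (@lebesgue_measure_itvcc _ _ _ (_ : lo <= mid)%R) -?EFinM;
    last by rewrite /mid; lra.
  have -> : (c * ((hi - lo) / 2) * (mid - lo) = c / 4 * (hi - lo) ^+ 2)%R
    by rewrite /mid; field.
  apply => // [u|u]; rewrite /= !in_itv /= /mid => /andP[? ?].
    by apply/andP; split; lra.
  by apply: kf; [apply/andP; split; lra | rewrite ler0_norm; lra].
Qed.

Section q_lower_bound.
Context {R : realType} {eta : R -> R} {c : R}.
Hypotheses (c0 : (0 <= c)%R) (hc : forall z, c%:E <= twoinv eta z).

Lemma integral_twoinv_ge a b : (a <= b)%R ->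
  (c * (b - a))%:E <= \int[@lebesgue_measure R]_(z in `[a, b]) twoinv eta z.
Proof.
move=> ab; rewrite EFinM -(@lebesgue_measure_itvcc _ a b ab).
by apply: cst_mul_measure_le_integral => // z _; apply: le_trans (hc z).
Qed.

Lemma q_ge_sqr y x : (c / 4 * (x - y) ^+ 2)%:E <= q eta y x.
Proof.
rewrite /q; case: ifPn => [yx|]; last rewrite -ltNge => /ltW xy.
  apply: integral_itv_ge_dist_endpoint => //; first by left.
  move=> u /andP[yu _]; rewrite ger0_norm ?subr_ge0 //.
  exact: integral_twoinv_ge.
rewrite -sqrrN opprB; apply: integral_itv_ge_dist_endpoint => //; first by right.
move=> u /andP[_ uy]; rewrite ler0_norm ?subr_le0 // opprB.
exact: integral_twoinv_ge.
Qed.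

End q_lower_bound.

Lemma twoinv_ge_bound {R : realType} (eta : R -> R) (U : R) :
  (forall z, eta z != 0%R -> (`|eta z| <= U)%R) ->
  forall z, (2 / U ^+ 2)%:E <= twoinv eta z.
Proof.
move=> hU z; rewrite /twoinv; case: ifPn => [_|ez]; first exact: leey.
have e0 : (0 < `|eta z|)%R by rewrite normr_gt0.
have U0 : (0 < U)%R by apply: lt_le_trans e0 (hU z ez).
have e2 : (0 < eta z ^+ 2)%R by rewrite -real_normK ?num_real // exprn_gt0.
rewrite lee_fin ler_wpM2l // lef_pV2 ?posrE ?e2 ?exprn_gt0 //.
by rewrite -real_normK ?num_real // ler_sqr ?nnegrE ?hU // ltW.
Qed.

Lemma probability_eq_dirac d (T : measurableType d) (R : realType)
  (mu : probability T R) (a : T) :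
  measurable [set a] -> mu (~` [set a]) = 0 ->
  forall A, measurable A -> mu A = \d_a A.
Proof.
move=> ma mu0 A mA; rewrite diracE.
have mu0_sub B : measurable B -> B `<=` ~` [set a] -> mu B = 0.
  move=> mB Ba; apply/eqP; rewrite eq_le measure_ge0 andbT -mu0.
  by apply: le_measure; rewrite ?inE //; exact: measurableC.
have [Aa|nAa] := boolP (a \in A); last first.
  by rewrite mu0_sub // => x Ax xa; move: nAa; rewrite -xa mem_set.
have : mu (~` A) = 0.
  apply: mu0_sub; first exact: measurableC.
  by move=> x nAx xa; apply: nAx; rewrite xa; exact/set_mem.
rewrite probability_setC // => /eqP.
by rewrite sube_eq ?fin_num_adde_defr // add0e => /eqP <-.
Qed.

Definition far {R : realType} (dl : R) : set R := [set x | (dl <= `|x|)%R].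

Lemma measurable_far {R : realType} (dl : R) : measurable (far dl).
Proof.
have := @normr_measurable R setT measurableT _ (measurable_itv `[dl, +oo[).
rewrite setTI; congr measurable; apply/seteqP; split => x /=;
  by rewrite in_itv /= andbT.
Qed.

Lemma bigcup_far {R : realType} : \bigcup_n far (n.+1%:R^-1 : R) = ~` [set 0%R].
Proof.
apply/seteqP; split => [x [n _ /= xn] x0|x /= x0].
  by move: xn; rewrite /far /= x0 normr0 leNgt invr_gt0 ltr0Sn.
have /ltr_add_invr [n] : (0 < `|x|)%R by rewrite normr_gt0; apply/eqP.
by rewrite add0r => /ltW xn; exists n.
Qed.

Lemma exists_far_gt0 {R : realType} (mu : probability R R) :
  (exists2 A : set R, measurable A & mu A <> @dirac _ R 0%R R A) ->
  exists2 dl : R, (0 < dl)%R & 0 < mu (far dl).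
Proof.
move=> [A mA muA]; apply: contrapT => nfar; apply: muA.
apply: (@probability_eq_dirac _ _ R mu 0%R (measurable_set1 _)) mA.
have far0 n : mu (far (n.+1%:R^-1 : R)) = 0.
  apply/eqP; rewrite eq_le measure_ge0 andbT leNgt; apply/negP => mu_gt0.
  by apply: nfar; exists (n.+1%:R^-1)%R => //; rewrite invr_gt0.
have [Z [mZ muZ sZ]] : mu.-negligible (\bigcup_n far (n.+1%:R^-1 : R)).
  apply: negligible_bigcup => n; exists (far (n.+1%:R^-1)%R).
  by split; [exact: measurable_far | exact: far0 |].
apply/eqP; rewrite eq_le measure_ge0 andbT -muZ -bigcup_far.
apply: le_measure => //; rewrite inE //.
by apply: bigcupT_measurable => n; exact: measurable_far.
Qed.

Lemma G_ge_sqr {R : realType} (eta : R -> R) (mu : probability R R) (c dl y a : R) :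
  (0 <= c)%R -> (forall z, c%:E <= twoinv eta z) -> (0 <= dl)%R ->
  (c / 4 * dl ^+ 2 * a ^+ 2)%:E * mu (far dl) <= G eta mu y a.
Proof.
move=> c0 hc dl0; have c40 : (0 <= c / 4)%R by rewrite divr_ge0.
apply: cst_mul_measure_le_integral => //; first exact: measurable_far.
- by apply: mulr_ge0; [apply: mulr_ge0|]; rewrite ?sqr_ge0.
- move=> x _; apply: le_trans (q_ge_sqr c0 hc _ _).
  by rewrite lee_fin mulr_ge0 ?sqr_ge0.
move=> x /= dlx; apply: le_trans (q_ge_sqr c0 hc _ _).
rewrite lee_fin addrAC subrr add0r -mulrA ler_wpM2l // exprMn mulrC.
rewrite ler_wpM2l ?sqr_ge0 //.
by rewrite -[(x ^+ 2)%R]real_normK ?num_real // ler_sqr ?nnegrE.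
Qed.

Lemma aN_le_inv_sqrt {R : realType} (eta : R -> R) (mu : probability R R)
    (N : nat) (y K : R) :
  (0 < K)%R -> (0 < N)%N -> (forall a, (K * a ^+ 2)%:E <= G eta mu y a) ->
  aN eta mu N y <= (Num.sqrt K^-1 / Num.sqrt N%:R)%:E.
Proof.
move=> K0 N0 hG; apply: ge_ereal_sup => _ [a [a0 GaN] <-]; rewrite lee_fin.
have Ka2 : (K * a ^+ 2 <= N%:R^-1)%R by rewrite -lee_fin (le_trans (hG a)).
have K0' : (0 <= K^-1)%R by rewrite invr_ge0 ltW.
rewrite -sqrtrV ?ler0n // -sqrtrM // -(ger0_norm a0) -sqrtr_sqr.
rewrite ler_sqrt; last by rewrite mulr_ge0 // invr_ge0 ler0n.
by rewrite ler_pdivlMl.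
Qed.

Theorem mainTheorem12 (R : realType) (l r : \bar R) (eta : R -> R) (m : R)
  (mu : probability R R) (U : R) (N0 : nat)
  (hlr : l < r)
  (heta_meas : measurable_fun setT eta)
  (heta_nz : forall x : R, inI l r x -> eta x != 0%R)
  (heta_off : forall x : R, ~ inI l r x -> eta x = 0%R)
  (hloc : forall a b : R, inI l r a -> inI l r b ->
     (@lebesgue_measure R).-integrable `[a, b]%classic (fun z => ((eta z ^+ 2)^-1)%:E))
  (hm : inI l r m)
  (hmu_int : mu.-integrable setT (fun x : R => x%:E))
  (hmu_centered : \int[mu]_x x%:E = 0)
  (hmu_ndirac : exists2 A : set R, measurable A & mu A <> @dirac _ R (0%R : R) R A)
  (hS : standing_S l r eta mu m)
  (hN0pos : (0 < N0)%N)
  (hN0 : forall N : nat, (N0 <= N)%N -> forall y : R, inI l r y -> aN eta mu N y < +oo)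
  (hU : forall x : R, inI l r x -> (`|eta x| <= U)%R) :
  exists A : R, (0 <= A)%R /\
    forall N : nat, (N0 <= N)%N -> forall y : R, inI l r y ->
      aN eta mu N y <= (A / Num.sqrt N%:R)%:E.
Proof.
have hU' z : eta z != 0%R -> (`|eta z| <= U)%R.
  by move=> ez; apply: hU; apply: contrapT => /heta_off /eqP; exact/negP.
have U0 : (0 < U)%R by apply: lt_le_trans (hU m hm); rewrite normr_gt0 (heta_nz _ hm).
set c := (2 / U ^+ 2)%R.
have c0 : (0 < c)%R by rewrite divr_gt0 ?exprn_gt0.
have [dl dl0 far_gt0] := exists_far_gt0 mu hmu_ndirac.
set p := fine (mu (far dl)).
have muE : mu (far dl) = p%:E by rewrite fineK ?fin_num_measure //; exact: measurable_far.
set K := (c / 4 * dl ^+ 2 * p)%R.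
have p0 : (0 < p)%R by rewrite -lte_fin -muE.
have K0 : (0 < K)%R.
  by apply: mulr_gt0 => //; apply: mulr_gt0; [exact: divr_gt0 | exact: exprn_gt0].
exists (Num.sqrt K^-1); split => [|N N0N y _]; first exact: sqrtr_ge0.
apply: aN_le_inv_sqrt => [//||a]; first exact: leq_trans N0N.
have := @G_ge_sqr _ eta mu c dl y a (ltW c0) (@twoinv_ge_bound _ _ _ hU') (ltW dl0).
by rewrite muE -EFinM mulrAC.
Qed.
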